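(* Let $(B,\sqsubseteq)$ be an ordered functor with a cofree comonad, let $\Sigma$ be a functor with a free monad, and let $\rho\colon\Sigma B^\infty\Rightarrow B\Sigma^*$ be a monotone biGSOS specification. Define $\varphi$ on the set of all functions $\Sigma^*\emptyset\to B\Sigma^*\emptyset$ by $$\varphi(f)=B\mu_\emptyset\circ\rho_{\Sigma^*\emptyset}\circ\Sigma f^\infty\circ\iota_\emptyset^{-1}$$ (here $\iota_\emptyset\colon\Sigma\Sigma^*\emptyset\to\Sigma^*\emptyset$ is a bijection). Then $\varphi$ is monotone for the pointwise order: if $f(t)\sqsubseteq_{B\Sigma^*\emptyset} g(t)$ for all $t\in\Sigma^*\emptyset$, then $\varphi(f)(t)\sqsubseteq_{B\Sigma^*\emptyset}\varphi(g)(t)$ for all $t\in\Sigma^*\emptyset$.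
   Context: An ordered functor $(B,\sqsubseteq)$ is a functor $B\colon\mathsf{Set}\to\mathsf{Set}$ together with a preorder $\sqsubseteq_{BX}$ on $BX$ for every set $X$, such that $Bf$ is monotone for every function $f$. Relation lifting: for $R\subseteq X\times Y$ with projections $\pi_1,\pi_2$ and any functor $F$, $\mathsf{Rel}(F)(R)=\{(b,c)\in FX\times FY\mid\exists d\in FR.\ F\pi_1(d)=b,\ F\pi_2(d)=c\}$; $\mathsf{Rel}_{\sqsubseteq}(B)(R)=\{(b,c)\mid\exists b',c'.\ b\sqsubseteq b',\ (b',c')\in\mathsf{Rel}(B)(R),\ c'\sqsubseteq c\}$. For coalgebras $f\colon X\to BX$, $g\colon Y\to BY$, $R\subseteq X\times Y$ is a simulation if $(f(x),g(y))\in\mathsf{Rel}_{\sqsubseteq}(B)(R)$ for all $(x,y)\in R$; similarity is the greatest simulation. Cofree comonad: for each set $X$, $\theta_X\colon B^\infty X\to BB^\infty X$, $\epsilon_X\colon B^\infty X\to X$ with $\langle\theta_X,\epsilon_X\rangle$ a final $B(-)\times X$-coalgebra; for $f\colon X\to BX$, $f^\infty\colon X\to B^\infty X$ is the unique coalgebra morphism from $\langle f,\mathrm{id}_X\rangle$ to $\langle\theta_X,\epsilon_X\rangle$. The functor $B(-)\times X$ is ordered by $(b,x)\,\widetilde\sqsubseteq\,(c,y)$ iff $b\sqsubseteq c$ and $x=y$; $\lesssim_{B^\infty X}$ is the similarity of $\langle\theta_X,\epsilon_X\rangle$ with itself w.r.t. this order. Free monad: for each set $X$, $\iota_X\colon\Sigma\Sigma^*X\to\Sigma^*X$,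 $\eta_X\colon X\to\Sigma^*X$ with $[\iota_X,\eta_X]$ an initial algebra for $\Sigma(-)+X$ (in particular a bijection); $\mu_X\colon\Sigma^*\Sigma^*X\to\Sigma^*X$ is the unique map with $\mu_X\circ\eta_{\Sigma^*X}=\mathrm{id}$ and $\mu_X\circ\iota_{\Sigma^*X}=\iota_X\circ\Sigma\mu_X$. A biGSOS specification is a natural transformation $\rho\colon\Sigma B^\infty\Rightarrow B\Sigma^*$. It is monotone if for every set $X$ and all $u,v\in\Sigma B^\infty X$ with $(u,v)\in\mathsf{Rel}(\Sigma)(\lesssim_{B^\infty X})$ we have $\rho_X(u)\sqsubseteq_{B\Sigma^*X}\rho_X(v)$. *)

Record Functor : Type := {
  fobj :> Type -> Type;
  fmap : forall (X Y : Type), (X -> Y) -> fobj X -> fobj Y;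
  fmap_id : forall (X : Type) (x : fobj X), fmap X X (fun y => y) x = x;
  fmap_comp : forall (X Y Z : Type) (f : X -> Y) (g : Y -> Z) (x : fobj X),
      fmap Y Z g (fmap X Y f x) = fmap X Z (fun y => g (f y)) x
}.
Arguments fmap f0 {X Y} _ _.

Record OrdFunctor : Type := {
  ofun :> Functor;
  ole : forall X : Type, ofun X -> ofun X -> Prop;
  ole_refl : forall X (b : ofun X), ole X b b;
  ole_trans : forall X (a b c : ofun X), ole X a b -> ole X b c -> ole X a c;
  fmap_mono : forall X Y (f : X -> Y) (a b : ofun X),
      ole X a b -> ole Y (fmap ofun f a) (fmap ofun f b)
}.
Arguments ole o {X} _ _.

Definition relLift (F : Type -> Type)
  (Fm : forall X Y : Type, (X -> Y) -> F X -> F Y)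
  {X Y : Type} (R : X -> Y -> Prop) (b : F X) (c : F Y) : Prop :=
  exists d : F {p : X * Y | R (fst p) (snd p)},
    Fm _ _ (fun p => fst (proj1_sig p)) d = b /\
    Fm _ _ (fun p => snd (proj1_sig p)) d = c.

Definition relLiftOrd (F : Type -> Type)
  (Fm : forall X Y : Type, (X -> Y) -> F X -> F Y)
  (le : forall X : Type, F X -> F X -> Prop)
  {X Y : Type} (R : X -> Y -> Prop) (b : F X) (c : F Y) : Prop :=
  exists (b' : F X) (c' : F Y),
    le X b b' /\ relLift F Fm R b' c' /\ le Y c' c.

Definition simulation (F : Type -> Type)
  (Fm : forall X Y : Type, (X -> Y) -> F X -> F Y)
  (le : forall X : Type, F X -> F X -> Prop)
  {X Y : Type} (f : X -> F X) (g : Y -> F Y) (R : X -> Y -> Prop) : Prop :=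
  forall x y, R x y -> relLiftOrd F Fm le R (f x) (g y).

Definition similarity (F : Type -> Type)
  (Fm : forall X Y : Type, (X -> Y) -> F X -> F Y)
  (le : forall X : Type, F X -> F X -> Prop)
  {X Y : Type} (f : X -> F X) (g : Y -> F Y) (x : X) (y : Y) : Prop :=
  exists R : X -> Y -> Prop, simulation F Fm le f g R /\ R x y.

Definition BxF (B : OrdFunctor) (X : Type) : Type -> Type :=
  fun Z => (B Z * X)%type.
Definition BxMap (B : OrdFunctor) (X : Type) :
  forall Z W : Type, (Z -> W) -> BxF B X Z -> BxF B X W :=
  fun Z W h p => (fmap B h (fst p), snd p).
Definition BxLe (B : OrdFunctor) (X : Type) :
  forall Z : Type, BxF B X Z -> BxF B X Z -> Prop :=
  fun Z p q => ole B (fst p) (fst q) /\ snd p = snd q.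

(** Cofree comonad: for each X, a final B(-) x X coalgebra <theta_X, eps_X>. *)
Record Cofree (B : Functor) : Type := {
  cf_obj : Type -> Type;
  cf_theta : forall X, cf_obj X -> B (cf_obj X);
  cf_eps : forall X, cf_obj X -> X;
  cf_corec : forall X Z : Type, (Z -> B Z * X) -> Z -> cf_obj X;
  cf_corec_theta : forall X Z (h : Z -> B Z * X) (z : Z),
      cf_theta X (cf_corec X Z h z) = fmap B (cf_corec X Z h) (fst (h z));
  cf_corec_eps : forall X Z (h : Z -> B Z * X) (z : Z),
      cf_eps X (cf_corec X Z h z) = snd (h z);
  cf_corec_unique : forall X Z (h : Z -> B Z * X) (u : Z -> cf_obj X),
      (forall z, cf_theta X (u z) = fmap B u (fst (h z)) /\ cf_eps X (u z) = snd (h z)) ->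
      forall z, u z = cf_corec X Z h z
}.
Arguments cf_obj {B} _ _.
Arguments cf_theta {B} _ {X} _.
Arguments cf_eps {B} _ {X} _.
Arguments cf_corec {B} _ {X Z} _ _.

Definition cf_lift {B : Functor} (C : Cofree B) {X : Type} (f : X -> B X) :
  X -> cf_obj C X := cf_corec C (fun x => (f x, x)).

Definition cf_map {B : Functor} (C : Cofree B) {X Y : Type} (k : X -> Y) :
  cf_obj C X -> cf_obj C Y :=
  cf_corec C (fun t => (cf_theta C t, k (cf_eps C t))).

Definition cf_coalg {B : OrdFunctor} (C : Cofree B) (X : Type) :
  cf_obj C X -> BxF B X (cf_obj C X) := fun t => (cf_theta C t, cf_eps C t).
Definition cf_sim {B : OrdFunctor} (C : Cofree B) (X : Type) :
  cf_obj C X -> cf_obj C X -> Prop :=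
  similarity (BxF B X) (BxMap B X) (BxLe B X) (cf_coalg C X) (cf_coalg C X).

(** Free monad: for each X, an initial Sigma(-) + X algebra [iota_X, eta_X]. *)
Record FreeMonad (S : Functor) : Type := {
  fm_obj : Type -> Type;
  fm_iota : forall X, S (fm_obj X) -> fm_obj X;
  fm_eta : forall X, X -> fm_obj X;
  fm_fold : forall X Z : Type, (S Z -> Z) -> (X -> Z) -> fm_obj X -> Z;
  fm_fold_iota : forall X Z (a : S Z -> Z) (e : X -> Z) (s : S (fm_obj X)),
      fm_fold X Z a e (fm_iota X s) = a (fmap S (fm_fold X Z a e) s);
  fm_fold_eta : forall X Z (a : S Z -> Z) (e : X -> Z) (x : X),
      fm_fold X Z a e (fm_eta X x) = e x;
  fm_fold_unique : forall X Z (a : S Z -> Z) (e : X -> Z) (u : fm_obj X -> Z),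
      (forall s, u (fm_iota X s) = a (fmap S u s)) ->
      (forall x, u (fm_eta X x) = e x) ->
      forall t, u t = fm_fold X Z a e t
}.
Arguments fm_obj {S} _ _.
Arguments fm_iota {S} _ {X} _.
Arguments fm_eta {S} _ {X} _.
Arguments fm_fold {S} _ {X Z} _ _ _.

Definition fm_mu {S : Functor} (M : FreeMonad S) (X : Type) :
  fm_obj M (fm_obj M X) -> fm_obj M X :=
  fm_fold M (fm_iota M) (fun t => t).

Definition fm_map {S : Functor} (M : FreeMonad S) {X Y : Type} (k : X -> Y) :
  fm_obj M X -> fm_obj M Y :=
  fm_fold M (fm_iota M) (fun x => fm_eta M (k x)).

(** The inverse of the bijection iota_∅ : Sigma Sigma^* ∅ -> Sigma^* ∅ (Lambek). *)
Definition fm_iota_inv0 {S : Functor} (M : FreeMonad S) :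
  fm_obj M Empty_set -> S (fm_obj M Empty_set) :=
  fm_fold M (Z := S (fm_obj M Empty_set)) (fmap S (fm_iota M))
    (fun e : Empty_set => match e with end).

Definition biGSOS_natural {B : Functor} (C : Cofree B) {S : Functor} (M : FreeMonad S)
  (rho : forall X, S (cf_obj C X) -> B (fm_obj M X)) : Prop :=
  forall (X Y : Type) (k : X -> Y) (u : S (cf_obj C X)),
    rho Y (fmap S (cf_map C k) u) = fmap B (fm_map M k) (rho X u).

Definition biGSOS_monotone {B : OrdFunctor} (C : Cofree B) {S : Functor} (M : FreeMonad S)
  (rho : forall X, S (cf_obj C X) -> B (fm_obj M X)) : Prop :=
  forall (X : Type) (u v : S (cf_obj C X)),
    relLift S (@fmap S) (cf_sim C X) u v -> ole B (rho X u) (rho X v).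

Definition phi {B : Functor} (C : Cofree B) {S : Functor} (M : FreeMonad S)
  (rho : forall X, S (cf_obj C X) -> B (fm_obj M X))
  (f : fm_obj M Empty_set -> B (fm_obj M Empty_set)) :
  fm_obj M Empty_set -> B (fm_obj M Empty_set) :=
  fun t => fmap B (fm_mu M Empty_set)
             (rho (fm_obj M Empty_set) (fmap S (cf_lift C f) (fm_iota_inv0 M t))).


(* The lifts [f^infty] and [g^infty] are related pointwise by the simulation
   {(f^infty x, g^infty x)} of the cofree coalgebra: one step of [f^infty x]
   is [B f^infty (f x)], which lies below [B f^infty (g x)] by monotonicity of
   [B f^infty], and [B f^infty (g x)] is related to [B g^infty (g x)] by the
   relation lifting.  Hence [Sigma f^infty] and [Sigma g^infty] send every
   [iota^-1 t] to a pair in [Rel(Sigma)(≲)], and monotonicity of [rho]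
   followed by monotonicity of [B mu] concludes. *)

Lemma relLift_fmap (F : Functor) {X Y Z : Type} (R : Y -> Z -> Prop)
  (h : X -> Y) (k : X -> Z) (HR : forall x, R (h x) (k x)) (u : F X) :
  relLift F (@fmap F) R (fmap F h u) (fmap F k u).
Proof.
  exists (fmap F (fun x => exist (fun p => R (fst p) (snd p)) (h x, k x) (HR x)) u).
  rewrite !fmap_comp; split; reflexivity.
Qed.

Lemma relLift_BxF (B : OrdFunctor) {X Y Z : Type} (R : Y -> Z -> Prop)
  (b : B Y) (c : B Z) (x : X) :
  relLift B (@fmap B) R b c -> relLift (BxF B X) (BxMap B X) R (b, x) (c, x).
Proof.
  intros [d [Hb Hc]].
  exists (d, x); unfold BxMap; simpl; rewrite Hb, Hc; split; reflexivity.
Qed.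

Lemma cf_lift_sim (B : OrdFunctor) (C : Cofree B) {X : Type} (f g : X -> B X)
  (Hfg : forall x, ole B (f x) (g x)) (x : X) :
  cf_sim C X (cf_lift C f x) (cf_lift C g x).
Proof.
  exists (fun a b => exists y, a = cf_lift C f y /\ b = cf_lift C g y).
  split; [| exists x; split; reflexivity].
  intros a b [y [-> ->]].
  unfold cf_coalg, cf_lift; rewrite !cf_corec_theta, !cf_corec_eps; simpl.
  exists (fmap B (cf_lift C f) (g y), y), (fmap B (cf_lift C g) (g y), y).
  split; [| split].
  - split; [apply fmap_mono, Hfg | reflexivity].
  - apply relLift_BxF, relLift_fmap.
    intros z; exists z; split; reflexivity.
  - split; [apply ole_refl | reflexivity].
Qed.

Theorem mainTheorem5 (B : OrdFunctor) (C : Cofree B) (S : Functor) (M : FreeMonad S)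
  (rho : forall X : Type, S (cf_obj C X) -> B (fm_obj M X))
  (Hnat : biGSOS_natural C M rho) (Hmono : biGSOS_monotone C M rho)
  (f g : fm_obj M Empty_set -> B (fm_obj M Empty_set)) :
  (forall t, ole B (f t) (g t)) ->
  forall t, ole B (phi C M rho f t) (phi C M rho g t).
Proof.
  intros Hfg t; unfold phi.
  apply fmap_mono, Hmono, relLift_fmap.
  exact (cf_lift_sim B C f g Hfg).
Qed.
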